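(* Let $\mathcal A$ be a linear time-invariant algorithm with $n$ oracles and realization $(A,B,C,D)$, let $\kappa\subseteq[n]$ with $\bar\kappa=[n]\setminus\kappa$ and $D[\kappa]$ invertible. If $\mathcal A$ converges to a fixed point $(y[\kappa]^\star,y[\bar\kappa]^\star,u[\kappa]^\star,u[\bar\kappa]^\star,x^\star)$, then its conjugate $\mathcal B=\mathcal C_\kappa\mathcal A$ converges to the fixed point $(u[\kappa]^\star,y[\bar\kappa]^\star,y[\kappa]^\star,u[\bar\kappa]^\star,x^\star)$.
   Context: $\mathcal A$ generates $x^{k+1}=Ax^k+Bu^k$, $y^k=Cx^k+Du^k$, $u^k=\phi(y^k)$, where the oracles are (sub)gradients $\partial f_i$, $i\in[n]$; $y[\kappa],u[\kappa]$ denote the components of oracle arguments/outputs belonging to oracles in $\kappa$, and $D[\kappa]$ the corresponding diagonal block of $D$. A fixed point is a tuple of oracle arguments, oracle outputs and state satisfying $x^\star=Ax^\star+Bu^\star$, $y^\star=Cx^\star+Du^\star$, $u^\star=\phi(y^\star)$ (listed as arguments, then outputs, then state). The conjugation $\mathcal C_\kappa\mathcal A$ rewrites $\mathcal A$ to call $\partial f_i^\star=(\partial f_i)^{-1}$ instead of $\partial f_i$ for $i\in\kappa$, so that for these oracles the argument and output are swapped (the new oracle argument is the old output and vice versa); its realization is obtained by solving the $\kappa$-rows of $y=Cx+Du$ for $u[\kappa]$. *)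

From HB Require Import structures.
From mathcomp Require Import all_boot all_order all_algebra.
From mathcomp Require Import all_classical all_reals all_analysis.
Import Order.TTheory GRing.Theory Num.Theory.
Import numFieldNormedType.Exports.
Local Open Scope ring_scope.
Local Open Scope classical_set_scope.

(*  - m : total number of scalar components of the oracle-argument vector y *)
(*        (and of the oracle-output vector u, same size).                   *)
(*  - n : number of oracles; own j : 'I_n says to which oracle the scalar   *)
(*        component j : 'I_m belongs (so oracle i acts on the block of      *)
(*        components [set j | own j == i], of arbitrary dimension).          *)

Section Defs.
Context {R : realType}.

(* selection matrix of the components in S (in increasing order):
   (Sel S)^T *m v = v[S], and Sel S *m w embeds w back into 'cV_m. *)
Definition Sel {m : nat} (S : {set 'I_m}) : 'M[R]_(m, #|S|) :=
  \matrix_(j < m, k < #|S|) ((j == enum_val k)%:R).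

Definition ocomp {m n : nat} (own : 'I_m -> 'I_n) (i : 'I_n) : {set 'I_m} :=
  [set j | own j == i].
Definition compK {m n : nat} (own : 'I_m -> 'I_n) (kappa : {set 'I_n})
  : {set 'I_m} := [set j | own j \in kappa].

Definition blk {m n : nat} (own : 'I_m -> 'I_n) (i : 'I_n) (v : 'cV[R]_m)
  : 'cV[R]_#|ocomp own i| := (Sel (ocomp own i))^T *m v.

Definition subgrad {d : nat} (f : 'cV[R]_d -> \bar R) (y g : 'cV[R]_d) : Prop :=
  f y \is a fin_num /\
  forall z : 'cV[R]_d, (f y + ((g^T *m (z - y)) 0 0)%:E <= f z)%E.

(* Oracle i is \partial f_i if i \notin conj, and
   (\partial f_i)^{-1} = \partial f_i^* if i \in conj, i.e. the output u_i
   satisfies  y_i \in \partial f_i (u_i). *)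
Definition oracle {m n : nat} (own : 'I_m -> 'I_n)
  (f : forall i : 'I_n, 'cV[R]_#|ocomp own i| -> \bar R)
  (conj : {set 'I_n}) (y u : 'cV[R]_m) : Prop :=
  forall i : 'I_n,
    if i \in conj then subgrad (f i) (blk own i u) (blk own i y)
    else subgrad (f i) (blk own i y) (blk own i u).

Definition trajectory {p m n : nat} (own : 'I_m -> 'I_n)
  (f : forall i : 'I_n, 'cV[R]_#|ocomp own i| -> \bar R) (conj : {set 'I_n})
  (A : 'M[R]_p) (B : 'M[R]_(p, m)) (C : 'M[R]_(m, p)) (D : 'M[R]_m)
  (x : nat -> 'cV[R]_p) (y u : nat -> 'cV[R]_m) : Prop :=
  forall k : nat,
    [/\ x k.+1 = A *m x k + B *m u k,
        y k = C *m x k + D *m u k &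
        oracle own f conj (y k) (u k)].

Definition fixed_point {p m n : nat} (own : 'I_m -> 'I_n)
  (f : forall i : 'I_n, 'cV[R]_#|ocomp own i| -> \bar R) (conj : {set 'I_n})
  (A : 'M[R]_p) (B : 'M[R]_(p, m)) (C : 'M[R]_(m, p)) (D : 'M[R]_m)
  (ys us : 'cV[R]_m) (xs : 'cV[R]_p) : Prop :=
  [/\ xs = A *m xs + B *m us, ys = C *m xs + D *m us &
      oracle own f conj ys us].

Definition converges_to {p m n : nat} (own : 'I_m -> 'I_n)
  (f : forall i : 'I_n, 'cV[R]_#|ocomp own i| -> \bar R) (conj : {set 'I_n})
  (A : 'M[R]_p) (B : 'M[R]_(p, m)) (C : 'M[R]_(m, p)) (D : 'M[R]_m)
  (ys us : 'cV[R]_m) (xs : 'cV[R]_p) : Prop :=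
  fixed_point own f conj A B C D ys us xs /\
  forall (x : nat -> 'cV[R]_p) (y u : nat -> 'cV[R]_m),
    trajectory own f conj A B C D x y u ->
    [/\ x @ \oo --> xs, y @ \oo --> ys & u @ \oo --> us].

(* Realization of the conjugate C_kappa A.  With SK := Sel K (K = components *)
(* of the oracles in kappa), SL := Sel (~: K), Di := D[kappa]^{-1}, solving  *)
(* the kappa-rows  y[K] = C[K] x + D[K,K] u[K] + D[K,L] u[L]  gives          *)
(*   u[K] = Di (y[K] - C[K] x - D[K,L] u[L]).                                *)
(* New oracle arguments  y' = SK u[K] + SL y[L],                             *)
(* new oracle outputs    u' = SK y[K] + SL u[L]  (components keep their      *)
(* positions), and                                                          *)
(*   x+     = A x + B SK u[K] + B SL u[L]                                   *)
(*   y'[K]  = u[K]                                                          *)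
(*   y'[L]  = C[L] x + D[L,K] u[K] + D[L,L] u[L].                           *)
Section Conj.
Variables (p m n : nat) (own : 'I_m -> 'I_n) (kappa : {set 'I_n}).
Variables (A : 'M[R]_p) (B : 'M[R]_(p, m)) (C : 'M[R]_(m, p)) (D : 'M[R]_m).

Let K := compK own kappa.
Let SK := Sel K.
Let SL := Sel (~: K).

Definition Dkappa : 'M[R]_#|K| := SK^T *m D *m SK.

Let Di := invmx Dkappa.
(* u[K] = EX x + EY y[K] + EU u[L] *)
Let EX : 'M[R]_(#|K|, p) := - (Di *m SK^T *m C).
Let EY : 'M[R]_#|K| := Di.
Let EU : 'M[R]_(#|K|, #|~: K|) := - (Di *m SK^T *m D *m SL).

Definition conjA : 'M[R]_p := A + B *m SK *m EX.
Definition conjB : 'M[R]_(p, m) :=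
  B *m SK *m EY *m SK^T + (B *m SL + B *m SK *m EU) *m SL^T.
Definition conjC : 'M[R]_(m, p) :=
  SK *m EX + SL *m (SL^T *m C + SL^T *m D *m SK *m EX).
Definition conjD : 'M[R]_m :=
  SK *m (EY *m SK^T + EU *m SL^T)
  + SL *m (SL^T *m D *m SK *m EY *m SK^T
           + (SL^T *m D *m SL + SL^T *m D *m SK *m EU) *m SL^T).

End Conj.

Definition mergeK {m n : nat} (own : 'I_m -> 'I_n) (kappa : {set 'I_n})
  (v w : 'cV[R]_m) : 'cV[R]_m :=
  Sel (compK own kappa) *m ((Sel (compK own kappa))^T *m v)
  + Sel (~: compK own kappa) *m ((Sel (~: compK own kappa))^T *m w).

End Defs.
Arguments Dkappa {R m n} own kappa D.
Arguments conjA {R p m n} own kappa A B C D.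
Arguments conjB {R p m n} own kappa B D.
Arguments conjC {R p m n} own kappa C D.
Arguments conjD {R m n} own kappa D.

From Pilot Require Import Defs.
From HB Require Import structures.
From mathcomp Require Import all_boot all_order all_algebra.
From mathcomp Require Import all_classical all_reals all_analysis.
Import Order.TTheory GRing.Theory Num.Theory.
Import numFieldNormedType.Exports.
Local Open Scope ring_scope.

(* The conjugate algorithm only relabels trajectories: (x, y, u) is generated
   by C_kappa A iff (x, mergeK u y, mergeK y u) is generated by A, i.e. iff the
   kappa-components of oracle arguments and outputs are swapped.  For the
   linear part this holds because the realization of C_kappa A is obtained by
   solving the kappa-rows of y = C x + D u for u[kappa], which is an
   equivalence as D[kappa] is invertible; for the oracles it holds because
   u_i is returned by (\partial f_i)^-1 at y_i exactly when y_i is returned by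
   \partial f_i at u_i.  The swap is a continuous involution, so fixed points
   and convergence transfer from A to C_kappa A. *)

Section Selection.
Context {R : realType} {m : nat}.
Implicit Types S T : {set 'I_m}.

Lemma mulTSel S : (Sel S)^T *m Sel S = 1%:M :> 'M[R]_#|S|.
Proof.
apply/matrixP => k k'; rewrite !mxE (bigD1 (enum_val k)) //= big1.
  by rewrite !mxE eqxx mul1r addr0 (inj_eq enum_val_inj); case: (k == k').
by move=> j /negbTE; rewrite !mxE => ->; rewrite mul0r.
Qed.

Lemma mulTSel_disjoint S T : [disjoint S & T] ->
  (Sel S)^T *m Sel T = 0 :> 'M[R]_(#|S|, #|T|).
Proof.
move=> dST; apply/matrixP => k k'; rewrite !mxE big1 // => j _.
rewrite !mxE; case: eqP => [->|]; last by rewrite mul0r.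
case: eqP => [E|]; last by rewrite mulr0.
have := enum_valP k; have := enum_valP k'; rewrite -E => hT hS.
by rewrite (disjointFr dST hS) in hT.
Qed.

Lemma mulSelT_entry S (j j' : 'I_m) :
  (Sel S *m (Sel S)^T) j j' = ((j == j') && (j \in S))%:R :> R.
Proof.
rewrite !mxE; under eq_bigr do rewrite !mxE.
rewrite -(big_enum_val (fun t => (j == t)%:R * (j' == t)%:R)) /=.
case jS: (j \in S).
  rewrite (bigD1 j) //= big1 ?eqxx ?mul1r ?addr0 ?andbT 1?eq_sym //.
  by move=> t /andP [_ /negbTE]; rewrite eq_sym => ->; rewrite mul0r.
rewrite big1 ?andbF // => t tS; have /negbTE -> : j != t.
  by apply: contraFN jS => /eqP ->.
by rewrite mul0r.
Qed.

Lemma mulSelT_partition S :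
  Sel S *m (Sel S)^T + Sel (~: S) *m (Sel (~: S))^T = 1%:M :> 'M[R]_m.
Proof.
apply/matrixP => j j'; rewrite mxE !mulSelT_entry mxE inE.
by case: (j == j'); case: (j \in S); rewrite ?addr0 ?add0r.
Qed.

Lemma Sel_decomp S {k} (v : 'M[R]_(m, k)) :
  v = Sel S *m ((Sel S)^T *m v) + Sel (~: S) *m ((Sel (~: S))^T *m v).
Proof. by rewrite !mulmxA -mulmxDl mulSelT_partition mul1mx. Qed.

Lemma Sel_eq S {k} (v w : 'M[R]_(m, k)) :
  (Sel S)^T *m v = (Sel S)^T *m w ->
  (Sel (~: S))^T *m v = (Sel (~: S))^T *m w -> v = w.
Proof.
by move=> eqS eqC; rewrite (Sel_decomp S v) (Sel_decomp S w) eqS eqC.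
Qed.

Lemma disjoint_setC S : [disjoint S & ~: S].
Proof. by rewrite finset.disjoints_subset finset.setCK. Qed.

Lemma mulTSel_glue S {k} (X : 'M[R]_(#|S|, k)) (Y : 'M[R]_(#|~: S|, k)) :
  (Sel S)^T *m (Sel S *m X + Sel (~: S) *m Y) = X.
Proof.
by rewrite mulmxDr !mulmxA mulTSel (mulTSel_disjoint _ _ (disjoint_setC S))
  mul1mx mul0mx addr0.
Qed.

Lemma mulTSelC_glue S {k} (X : 'M[R]_(#|S|, k)) (Y : 'M[R]_(#|~: S|, k)) :
  (Sel (~: S))^T *m (Sel S *m X + Sel (~: S) *m Y) = Y.
Proof.
have dCS : [disjoint ~: S & S] by rewrite disjoint_sym disjoint_setC.
by rewrite mulmxDr !mulmxA mulTSel (mulTSel_disjoint _ _ dCS) mul1mx mul0mx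
  add0r.
Qed.

Lemma mulTSel_sub S T {k} (v w : 'M[R]_(m, k)) : T \subset S ->
  (Sel S)^T *m v = (Sel S)^T *m w -> (Sel T)^T *m v = (Sel T)^T *m w.
Proof.
move=> sTS eqS; have dTC : [disjoint T & ~: S].
  by rewrite finset.disjoints_subset finset.setCK.
rewrite (Sel_decomp S v) (Sel_decomp S w) eqS !mulmxDr.
by rewrite ![(Sel T)^T *m (Sel (~: S) *m _)]mulmxA (mulTSel_disjoint _ _ dTC)
  !mul0mx.
Qed.

End Selection.

Local Open Scope classical_set_scope.

Lemma cvg_mulmxl {R : realType} {T : Type} (F : set_system T) {FF : Filter F}
  a b (M : 'M[R]_(a, b)) (v : T -> 'cV[R]_b) (l : 'cV[R]_b) :
  v @ F --> l -> (fun t => M *m v t) @ F --> M *m l.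
Proof.
have colE (w : 'cV[R]_b) : M *m w = \sum_(j < b) w j 0 *: col j M.
  apply/matrixP => i z; rewrite (ord1 z) !mxE summxE.
  by apply: eq_bigr => j _; rewrite !mxE mulrC.
move=> cv; under eq_cvg do rewrite colE; rewrite colE.
apply: (@cvg_big _ _ +%R 0 xpredT add_continuous) => // j _.
apply: cvgZ; last exact: cvg_cst.
exact: (continuous_cvg _ (@coord_continuous _ _ _ j 0 l) cv).
Qed.

Section Merge.
Context {R : realType} {m n : nat} (own : 'I_m -> 'I_n) (kappa : {set 'I_n}).
Local Notation K := (compK own kappa).
Implicit Types v w : 'cV[R]_m.

Lemma mulTSel_mergeK v w :
  (Sel K)^T *m mergeK own kappa v w = (Sel K)^T *m v.
Proof. exact: mulTSel_glue. Qed.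

Lemma mulTSelC_mergeK v w :
  (Sel (~: K))^T *m mergeK own kappa v w = (Sel (~: K))^T *m w.
Proof. exact: mulTSelC_glue. Qed.

Lemma mergeK_swapK v w :
  mergeK own kappa (mergeK own kappa v w) (mergeK own kappa w v) = v.
Proof.
by apply: (Sel_eq K); rewrite ?mulTSel_mergeK ?mulTSelC_mergeK.
Qed.

Lemma blk_mergeK i v w :
  blk own i (mergeK own kappa v w) = blk own i (if i \in kappa then v else w).
Proof.
rewrite /blk; case: ifP => ki.
  apply: (mulTSel_sub K); last exact: mulTSel_mergeK.
  by apply/fintype.subsetP => j; rewrite !inE => /eqP ->.
apply: (mulTSel_sub (~: K)); last exact: mulTSelC_mergeK.
by apply/fintype.subsetP => j; rewrite !inE => /eqP ->; rewrite ki.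
Qed.

Lemma oracle_mergeK (f : forall i : 'I_n, 'cV[R]_#|ocomp own i| -> \bar R) v w :
  oracle own f kappa v w <->
  oracle own f finset.set0 (mergeK own kappa w v) (mergeK own kappa v w).
Proof.
by split=> orc i; move: (orc i); rewrite !blk_mergeK finset.in_set0; case: ifP.
Qed.

Lemma cvg_mergeK {v w : nat -> 'cV[R]_m} {lv lw} :
  v @ \oo --> lv -> w @ \oo --> lw ->
  (fun k => mergeK own kappa (v k) (w k)) @ \oo --> mergeK own kappa lv lw.
Proof. by move=> cv cw; apply: cvgD; do 2 apply: cvg_mulmxl. Qed.

Lemma cvg_mergeK_swap {v w : nat -> 'cV[R]_m} {lv lw} :
  (fun k => mergeK own kappa (v k) (w k)) @ \oo --> lv ->
  (fun k => mergeK own kappa (w k) (v k)) @ \oo --> lw ->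
  v @ \oo --> mergeK own kappa lv lw.
Proof.
move=> cvw cwv; suff -> : v = fun k => mergeK own kappa
    (mergeK own kappa (v k) (w k)) (mergeK own kappa (w k) (v k)).
  exact: cvg_mergeK.
by apply: boolp.funext => k; rewrite mergeK_swapK.
Qed.

End Merge.

Section Conjugate.
Context {R : realType} {p m n : nat} {own : 'I_m -> 'I_n} {kappa : {set 'I_n}}.
Context {A : 'M[R]_p} {B : 'M[R]_(p, m)} {C : 'M[R]_(m, p)} {D : 'M[R]_m}.
Hypothesis Dkappa_unit : Dkappa own kappa D \in unitmx.

Local Notation K := (compK own kappa).
Local Notation SK := (Sel K : 'M[R]_(m, #|K|)).
Local Notation SL := (Sel (~: K) : 'M[R]_(m, #|~: K|)).
Local Notation Dk := (Dkappa own kappa D).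
Local Notation Di := (invmx Dk).
Local Notation cA := (conjA own kappa A B C D).
Local Notation cB := (conjB own kappa B D).
Local Notation cC := (conjC own kappa C D).
Local Notation cD := (conjD own kappa D).
Local Notation mergeK := (mergeK own kappa).
Implicit Types (x : 'cV[R]_p) (y u : 'cV[R]_m).

Definition solve_uK x (a : 'cV[R]_#|K|) (b : 'cV[R]_#|~: K|) : 'cV[R]_#|K| :=
  - (Di *m SK^T *m C) *m x + Di *m a + - (Di *m SK^T *m D *m SL) *m b.

Lemma solve_uKP x a b c :
  a = SK^T *m C *m x + Dk *m c + SK^T *m D *m SL *m b <-> c = solve_uK x a b.
Proof.
rewrite /solve_uK; move: Dkappa_unit; move: Dk => E E_unit; split => ->.
  rewrite !mulmxDr !mulmxA mulVmx // mul1mx ?mulNmx ?mulmxA.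
  by rewrite -addrA addrK addKr.
rewrite !mulmxDr !mulNmx !mulmxN ?mulmxA mulmxV // ?mul1mx.
by rewrite addrA addrNK addNKr.
Qed.

Lemma output_rowsK x (v : 'cV[R]_m) : SK^T *m (C *m x + D *m v) =
  SK^T *m C *m x + Dk *m (SK^T *m v) + SK^T *m D *m SL *m (SL^T *m v).
Proof. by rewrite [in LHS](Sel_decomp K v) /Dkappa !mulmxDr !mulmxA addrA. Qed.

Lemma conj_outputK x u :
  SK^T *m (cC *m x + cD *m u) = solve_uK x (SK^T *m u) (SL^T *m u).
Proof.
rewrite mulmxDr !mulmxA /conjC /conjD !mulTSel_glue /solve_uK.
by rewrite mulmxDl !mulmxA addrA.
Qed.

Lemma conj_outputL x u : SL^T *m (cC *m x + cD *m u) =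
  SL^T *m (C *m x +
           D *m (SK *m solve_uK x (SK^T *m u) (SL^T *m u) + SL *m (SL^T *m u))).
Proof.
rewrite mulmxDr !mulmxA /conjC /conjD !mulTSelC_glue /solve_uK.
rewrite !(mulmxDl, mulmxDr, mulmxN, mulNmx, mulmxA) -!addrA.
by congr (_ + (_ + (_ + _))); rewrite addrC.
Qed.

Lemma conj_state x u : cA *m x + cB *m u =
  A *m x + B *m (SK *m solve_uK x (SK^T *m u) (SL^T *m u) + SL *m (SL^T *m u)).
Proof.
rewrite /conjA /conjB /solve_uK.
rewrite !(mulmxDl, mulmxDr, mulmxN, mulNmx, mulmxA) -!addrA.
by congr (_ + (_ + (_ + _))); rewrite addrC.
Qed.

Lemma mergeK_conj_output x y u : SK^T *m y = SK^T *m (cC *m x + cD *m u) ->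
  mergeK y u = SK *m solve_uK x (SK^T *m u) (SL^T *m u) + SL *m (SL^T *m u).
Proof. by rewrite /Defs.mergeK => ->; rewrite conj_outputK. Qed.

Lemma conj_rowsKP x y u :
  SK^T *m mergeK u y = SK^T *m (C *m x + D *m mergeK y u) <->
  SK^T *m y = SK^T *m (cC *m x + cD *m u).
Proof.
rewrite output_rowsK !mulTSel_mergeK mulTSelC_mergeK conj_outputK.
exact: solve_uKP.
Qed.

Lemma conj_realizationP x x' y u :
  x' = cA *m x + cB *m u /\ y = cC *m x + cD *m u <->
  x' = A *m x + B *m mergeK y u /\ mergeK u y = C *m x + D *m mergeK y u.
Proof.
split=> [[-> ->] | [-> eqy]].
  have mergeE :=
    mergeK_conj_output _ _ _ (erefl (SK^T *m (cC *m x + cD *m u))).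
  split; first by rewrite mergeE conj_state.
  apply: (Sel_eq K); first exact/conj_rowsKP.
  by rewrite mulTSelC_mergeK conj_outputL mergeE.
have rowsK : SK^T *m y = SK^T *m (cC *m x + cD *m u).
  by apply/conj_rowsKP; rewrite eqy.
rewrite (mergeK_conj_output _ _ _ rowsK) in eqy *.
split; first by rewrite conj_state.
apply: (Sel_eq K) => //.
by rewrite -(mulTSelC_mergeK own kappa u y) eqy conj_outputL.
Qed.

Variable f : forall i : 'I_n, 'cV[R]_#|ocomp own i| -> \bar R.

Lemma conj_fixed_pointP y u x :
  fixed_point own f kappa cA cB cC cD y u x <->
  fixed_point own f finset.set0 A B C D (mergeK u y) (mergeK y u) x.
Proof.
split=> -[ex ey orc].
  have [] := (conj_realizationP x x y u).1 (conj ex ey).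
  by split=> //; apply/(oracle_mergeK own kappa f).
have [] := (conj_realizationP x x y u).2 (conj ex ey).
by split=> //; apply/(oracle_mergeK own kappa f).
Qed.

Lemma conj_trajectory (x : nat -> 'cV[R]_p) (y u : nat -> 'cV[R]_m) :
  trajectory own f kappa cA cB cC cD x y u ->
  trajectory own f finset.set0 A B C D x
    (fun k => mergeK (u k) (y k)) (fun k => mergeK (y k) (u k)).
Proof.
move=> traj k; have [ex ey orc] := traj k.
have [] := (conj_realizationP (x k) (x k.+1) (y k) (u k)).1 (conj ex ey).
by split=> //; apply/(oracle_mergeK own kappa f).
Qed.

End Conjugate.

Theorem proposition8p3 (R : realType) (p m n : nat) (own : 'I_m -> 'I_n)
  (f : forall i : 'I_n, 'cV[R]_#|ocomp own i| -> \bar R)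
  (A : 'M[R]_p) (B : 'M[R]_(p, m)) (C : 'M[R]_(m, p)) (D : 'M[R]_m)
  (kappa : {set 'I_n})
  (ys us : 'cV[R]_m) (xs : 'cV[R]_p) :
  Dkappa own kappa D \in unitmx ->
  converges_to own f (finset.set0 : {set 'I_n}) A B C D ys us xs ->
  converges_to own f kappa
    (conjA own kappa A B C D) (conjB own kappa B D)
    (conjC own kappa C D) (conjD own kappa D)
    (mergeK own kappa us ys) (mergeK own kappa ys us) xs.
Proof.
move=> Dkappa_unit [fixed conv]; split.
  by apply/(conj_fixed_pointP Dkappa_unit); rewrite !mergeK_swapK.
move=> x y u /(conj_trajectory Dkappa_unit)/conv[cvg_x cvg_y cvg_u].
by split=> //; [exact: cvg_mergeK_swap cvg_u cvg_y |
                exact: cvg_mergeK_swap cvg_y cvg_u].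
Qed.
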